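(* Let $G>I$ be a finite group with $Z(G)=I$ and $(C_1,C_2,C_3)$ a class vector of $G$ with $l^i(C_1,C_2,C_3)>0$. Let $[\underline{\sigma}]=[\sigma_1,\sigma_2,\sigma_3]\in\Sigma^i(C_1,C_2,C_3)$ with $\sigma_1^4=\sigma_2^4=\iota$ and $G=\langle\sigma_1^{-2}\sigma_3\sigma_1^2,\sigma_1^{-1}\sigma_3\sigma_1,\sigma_3\rangle$, and let $C=C_3$. Then $$v=[\sigma_1^{-2}\sigma_3\sigma_1^2,\ \sigma_1^{-1}\sigma_3\sigma_1,\ \sigma_3,\ \sigma_1^{-3}\sigma_3\sigma_1^3]\in\Sigma^i(C,C,C,C)$$ and $v^{\alpha_{4,0}}=v$, where $\alpha_{4,0}=\beta_2\beta_3\beta_4$.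
   Context: $\iota$ is the identity and $I$ the trivial group. For conjugacy classes $C_1,\dots,C_m$, $\Sigma^i(C_1,\dots,C_m)$ is the set of $G$-conjugacy classes $[\sigma_1,\dots,\sigma_m]$ (simultaneous conjugation) of tuples with $\sigma_j\in C_j$, $\langle\sigma_1,\dots,\sigma_m\rangle=G$, $\sigma_1\cdots\sigma_m=\iota$, and $l^i(C_1,\dots,C_m)=|\Sigma^i(C_1,\dots,C_m)|$. The element $\alpha_{4,0}=\beta_2\beta_3\beta_4$ of the Hurwitz braid group $H_4$ acts by $[\sigma_1,\sigma_2,\sigma_3,\sigma_4]^{\alpha_{4,0}}=[\sigma_2,\sigma_3,\sigma_4,\sigma_1]$. *)

From mathcomp Require Import all_boot all_fingroup all_solvable.
Set Implicit Arguments. Unset Strict Implicit. Unset Printing Implicit Defensive.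
Local Open Scope group_scope.

Section Defs.
Variables (gT : finGroupType) (n : nat).

Definition Sigma_tuples (G : {set gT}) (Cs : n.-tuple {set gT}) : {set n.-tuple gT} :=
  [set s : n.-tuple gT | [&& [forall i : 'I_n, tnth s i \in tnth Cs i],
                             <<[set x | x \in s]>> == G &
                             \prod_(x <- s) x == 1]].

Definition tclass (G : {set gT}) (s : n.-tuple gT) : {set n.-tuple gT} :=
  [set [tuple of map (fun x => x ^ g) s] | g in G].

Definition Sigma_i (G : {set gT}) (Cs : n.-tuple {set gT}) : {set {set n.-tuple gT}} :=
  tclass G @: Sigma_tuples G Cs.

Definition l_i (G : {set gT}) (Cs : n.-tuple {set gT}) : nat := #|Sigma_i G Cs|.

End Defs.

(* alpha_{4,0} = beta_2 beta_3 beta_4 acting on 4-tuples: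
   [s1,s2,s3,s4] |-> [s2,s3,s4,s1]. *)
Definition alpha40 (gT : finGroupType) (s : 4.-tuple gT) : 4.-tuple gT :=
  [tuple tnth s (inord 1); tnth s (inord 2); tnth s (inord 3); tnth s (inord 0)].

From mathcomp Require Import all_boot all_fingroup all_solvable.
Local Open Scope group_scope.

(* Write a = s1 and c = s3. As a^4 = 1, the entries of v are the conjugates
   c^(a^k) for k = 2, 1, 0, -1, so conjugating v by a^3 = a^-1 shifts it
   cyclically, which is exactly v^alpha_{4,0}; hence both have the same class.
   The product of the entries of v is (c a)^4 conjugated by a^2, and
   c a = s2^-1 because s1 s2 s3 = 1, so it is trivial since s2^4 = 1.
   Membership in Sigma^i is invariant under simultaneous conjugation, which is
   how the hypothesis on [s1, s2, s3] gives c in C3 and a in G. *)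

Lemma classesJ {gT : finGroupType} {G : {group gT}} {C : {set gT}} :
  C \in classes G -> {in C & G, forall y g, y ^ g \in C}.
Proof.
case/imsetP=> x _ -> _ g /imsetP[h hG ->] gG.
by rewrite -conjgM memJ_class // groupM.
Qed.

Lemma classes_sub {gT : finGroupType} {G : {group gT}} {C : {set gT}} :
  C \in classes G -> C \subset G.
Proof. by case/imsetP=> x xG ->; apply: class_subG. Qed.

Definition tconj {gT : finGroupType} {n : nat} (s : n.-tuple gT) (g : gT) :
  n.-tuple gT := [tuple of map (conjg^~ g) s].

Section TupleConjugation.

Variables (gT : finGroupType) (n : nat) (G : {group gT}).
Implicit Types (s : n.-tuple gT).

Lemma tconj1 s : tconj s 1 = s.
Proof. by apply: val_inj; rewrite /= (eq_map (@conjg1 _)) map_id. Qed.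

Lemma tconjM s g h : tconj s (g * h) = tconj (tconj s g) h.
Proof.
by apply: val_inj; rewrite /= -map_comp; apply: eq_map => x; rewrite conjgM.
Qed.

Lemma tclassE s : tclass G s = [set tconj s g | g in G].
Proof. by []. Qed.

Lemma mem_tclass s : s \in tclass G s.
Proof. by apply/imsetP; exists 1; rewrite ?group1 // -[LHS]tconj1. Qed.

Lemma tclassJ s g : g \in G -> tclass G (tconj s g) = tclass G s.
Proof.
move=> gG; rewrite !tclassE; apply/setP=> t.
apply/imsetP/imsetP=> [[h hG ->]|[h hG ->]].
  by exists (g * h); rewrite ?groupM // tconjM.
by exists (g^-1 * h); rewrite ?groupM ?groupV // -tconjM mulKVg.
Qed.

Lemma set_tconj s g : [set x | x \in tconj s g] = [set x | x \in s] :^ g.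
Proof.
apply/setP=> x; rewrite mem_conjg !inE.
apply/mapP/idP=> [[y ys ->]|xs]; first by rewrite conjgK.
by exists (x ^ g^-1); rewrite ?conjgKV.
Qed.

Variable Cs : n.-tuple {set gT}.
Hypothesis classesCs : forall i, tnth Cs i \in classes G.

Lemma Sigma_tuplesJ s g :
  g \in G -> s \in Sigma_tuples G Cs -> tconj s g \in Sigma_tuples G Cs.
Proof.
move=> gG; rewrite !inE => /and3P[/forallP sCs /eqP genG prod1].
apply/and3P; split.
- by apply/forallP=> i; rewrite tnth_map (classesJ (classesCs i)).
- by rewrite set_tconj genJ genG conjGid.
- by rewrite big_map -conjg_prod (eqP prod1) conj1g.
Qed.

Lemma mem_Sigma_i s : (tclass G s \in Sigma_i G Cs) = (s \in Sigma_tuples G Cs).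
Proof.
apply/imsetP/idP=> [[t tS eqst]|sS]; last by exists s.
have /imsetP[g gG ->] : s \in tclass G t by rewrite -eqst mem_tclass.
exact: Sigma_tuplesJ.
Qed.

End TupleConjugation.

Section OrderFourOrbit.

Variables (gT : finGroupType) (a c : gT).
Hypothesis a4 : a ^+ 4 = 1.

Definition orbit4 : 4.-tuple gT := [tuple c ^ (a ^+ 2); c ^ a; c; c ^ (a ^+ 3)].

Lemma expg3_order4 : a ^+ 3 = a^-1.
Proof. by apply/eqP; rewrite eq_sym eq_invg_mul -expgS a4. Qed.

Lemma prod_orbit4 : \prod_(x <- orbit4) x = ((c * a) ^+ 4) ^ (a ^+ 2).
Proof.
rewrite !big_cons big_nil mulg1 expg3_order4 !conjgE invgK !expgS expg0 !mulg1.
rewrite !mulgA mulgK -[in RHS]mulgA -[in RHS]mulgA; congr (_ * _).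
by rewrite -expg3_order4.
Qed.

Lemma alpha40_orbit4 : alpha40 orbit4 = tconj orbit4 (a ^+ 3).
Proof.
have expg_add4 m : a ^+ (m + 4) = a ^+ m by rewrite expgD a4 mulg1.
apply: val_inj; rewrite /= !(tnth_nth 1) /= !inordK // -!conjgM -expgS -!expgD.
by rewrite (expg_add4 1%N) (expg_add4 0%N) (expg_add4 2%N) conjg1.
Qed.

Lemma orbit4_Sigma_tuples (G : {group gT}) (C : {set gT}) :
  C \in classes G -> c \in C -> a \in G -> (c * a) ^+ 4 = 1 ->
  G = <<[set c ^ (a ^+ 2); c ^ a; c]>> :> {set gT} ->
  orbit4 \in Sigma_tuples G [tuple C; C; C; C].
Proof.
move=> classC cC aG ca4 genG; rewrite inE; apply/and3P; split.
- apply/forallP=> -[[|[|[|[|i]]]] lti] //; rewrite !(tnth_nth 1) /=;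
    by rewrite ?(classesJ classC) ?groupX.
- rewrite eqEsubset {2}genG genS ?andbT; last first.
    by apply/subsetP=> x; rewrite !inE -!orbA; case/or3P=> ->; rewrite ?orbT.
  rewrite gen_subG; apply/subsetP=> x; rewrite !inE.
  have cG : c \in G by apply: subsetP (classes_sub classC) _ _.
  by case/or4P=> /eqP ->; rewrite ?groupJ ?groupX.
- by rewrite prod_orbit4 ca4 conj1g.
Qed.

End OrderFourOrbit.

Theorem proposition8 (gT : finGroupType) (G : {group gT})
    (C1 C2 C3 : {set gT}) (s1 s2 s3 : gT) :
  G :!=: 1 ->
  'Z(G) = 1 ->
  C1 \in classes G -> C2 \in classes G -> C3 \in classes G ->
  0 < l_i G [tuple C1; C2; C3] ->
  tclass G [tuple s1; s2; s3] \in Sigma_i G [tuple C1; C2; C3] ->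
  s1 ^+ 4 = 1 -> s2 ^+ 4 = 1 ->
  G = <<[set s3 ^ (s1 ^+ 2); s3 ^ s1; s3]>> :> {set gT} ->
  let C := C3 in
  let v := [tuple s3 ^ (s1 ^+ 2); s3 ^ s1; s3; s3 ^ (s1 ^+ 3)] in
  tclass G v \in Sigma_i G [tuple C; C; C; C] /\
  tclass G (alpha40 v) = tclass G v.
Proof.
move=> _ _ classC1 classC2 classC3 _ Sigma_s a4 b4 genG C v.
have classesCs : forall i, tnth [tuple C1; C2; C3] i \in classes G.
  by case=> -[|[|[|]]].
move: Sigma_s; rewrite mem_Sigma_i // inE.
case/and3P=> /forallP s_in _ /eqP prod_s.
have s1G : s1 \in G.
  apply: subsetP (classes_sub classC1) _ _.
  by have := s_in ord0; rewrite !(tnth_nth 1).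
have s3C3 : s3 \in C3.
  by have := s_in (inord 2); rewrite !(tnth_nth 1) /= inordK.
have s3s1 : s3 * s1 = s2^-1.
  move: prod_s; rewrite !big_cons big_nil mulg1 mulgA => /eqP.
  by rewrite -eq_invg_mul => /eqP <-; rewrite invMg mulgKV.
have s3s1_4 : (s3 * s1) ^+ 4 = 1 by rewrite s3s1 expgVn b4 invg1.
split.
  rewrite mem_Sigma_i; first exact: orbit4_Sigma_tuples.
  by case=> -[|[|[|[|]]]].
by rewrite alpha40_orbit4 // tclassJ ?groupX.
Qed.
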